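(* Let $F$ be a Ferrers diagram and $G=G(F)$. For $c,c'\in\mathsf{Rec}^{\mathsf{min}}(G)$ we have $\mathsf{CanonTop}(c)=\mathsf{CanonTop}(c')$ if and only if $c=c'$.
   Context: Ferrers diagrams and graphs: a Ferrers diagram $F$ (English convention) of semiperimeter $n+1$ has rows and columns labeled by $0,\ldots,n$: the $n+1$ unit steps of its south-east boundary path, traversed from top-right to bottom-left, are labeled $0,1,\ldots,n$; a vertical step labels the row it bounds, a horizontal step the column it bounds (top row labeled $0$). $\mathsf{rows}(F)$, $\mathsf{cols}(F)$ are the row/column label sets; they partition $\{0,\ldots,n\}$, and $F$ has a cell in row $i$, column $j$ iff $i<j$. $G(F)$ has vertex set $\{0,\ldots,n\}$ with an edge between $i\in\mathsf{rows}(F)$ and $j\in\mathsf{cols}(F)$ iff $i<j$. Sandpile model with sink $0$: configurations $c\in\mathbb{N}^n$; non-sink $v$ unstable if $c_v\ge \deg(v)$; toppling $v$ sends one grain to each neighbour (grains sent to $0$ disappear); toppling the sink adds a grain to each of its neighbours. Recurrent configurations: stable configurations obtainable from the maximal stable configuration ($c_v=\deg(v)-1$) by adding grains and stabilizing; $\mathsf{Rec}(G)$ is their set and $\mathsf{Rec}^{\mathsf{min}}(G)$ the set of recurrent configurations with minimal total number of grains. Canonical toppling: for $c\in\mathsf{Rec}(G(F))$, starting from $c$ topple the sink ($U^{(0)}_c=\{0\}$), then alternately topple simultaneously all unstable vertices in $\mathsf{cols}(F)$ ($V^{(1)}_c$), all unstable vertices in $\mathsf{rows}(F)$ ($U^{(1)}_c$),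 all unstable in $\mathsf{cols}(F)$ ($V^{(2)}_c$), etc.; each vertex topples exactly once, and $\mathsf{CanonTop}(c)=(U^{(0)}_c,V^{(1)}_c,U^{(1)}_c,\ldots)$ is the resulting ordered set partition of $\{0,\ldots,n\}$. *)

From mathcomp Require Import all_boot.
Set Implicit Arguments. Unset Strict Implicit. Unset Printing Implicit Defensive.

Section Sandpile.
Variables (V : finType) (e : rel V) (s : V).

(* configurations: one value per vertex; the sink value is kept at 0 *)
Definition cfg := {ffun V -> nat}.

Definition deg (v : V) : nat := #|[set u | e v u]|.

Definition stable (c : cfg) : Prop := forall v, v != s -> c v < deg v.

Definition unstable (c : cfg) (v : V) : bool := (v != s) && (deg v <= c v).

(* simultaneous toppling of all vertices of U (each once); grains sent to the
   sink disappear; toppling the sink adds one grain to each neighbour *)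
Definition topple_set (U : {set V}) (c : cfg) : cfg :=
  [ffun u => if u == s then 0
             else (c u - (if u \in U then deg u else 0))
                  + #|[set v in U | e v u]|].

Definition add_grain (v : V) (c : cfg) : cfg :=
  [ffun u => c u + (u == v)].

Definition cmax : cfg := [ffun v => if v == s then 0 else (deg v).-1].

Inductive reach : cfg -> cfg -> Prop :=
| reach_refl c : reach c c
| reach_add c d v : v != s -> reach (add_grain v c) d -> reach c d
| reach_top c d v : unstable c v -> reach (topple_set [set v] c) d -> reach c d.

Definition recurrent (c : cfg) : Prop := stable c /\ reach cmax c.

Definition total (c : cfg) : nat := \sum_(v : V) c v.

Definition rec_min (c : cfg) : Prop :=
  recurrent c /\ forall d, recurrent d -> total c <= total d.

(* Canonical toppling: block 0 = {sink}; block k (k odd) = unstable vertices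
   in cols; block k (k even, k > 0) = unstable vertices in the complement
   (rows); each block is toppled simultaneously. *)
Fixpoint canon_aux (cols : {set V}) (c : cfg) (k : nat) : {set V} * cfg :=
  match k with
  | 0 => ([set s], topple_set [set s] c)
  | k'.+1 =>
      let cf := (canon_aux cols c k').2 in
      let side := if odd k then cols else ~: cols in
      let U := [set v in side | unstable cf v] in
      (U, topple_set U cf)
  end.

(* CanonTop c as the sequence of its blocks (U^(0), V^(1), U^(1), V^(2), ...) *)
Definition canon_top (cols : {set V}) (c : cfg) (k : nat) : {set V} :=
  (canon_aux cols c k).1.

End Sandpile.

(* A Ferrers diagram of semiperimeter n+1 is given by its set R of row labels
   in {0,..,n} (cols = complement); top row 0 is a row and n is a column. *)
Definition is_ferrers (n : nat) (R : {set 'I_n.+1}) : Prop :=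
  ord0 \in R /\ (ord_max : 'I_n.+1) \notin R.

Definition ferrers_rel (n : nat) (R : {set 'I_n.+1}) : rel 'I_n.+1 :=
  fun i j => ((i \in R) && (j \notin R) && (i < j))
          || ((j \in R) && (i \notin R) && (j < i)).

From Pilot Require Import Defs.
From mathcomp Require Import all_boot.
From mathcomp Require Import zify.
Set Implicit Arguments. Unset Strict Implicit. Unset Printing Implicit Defensive.

(* Recurrent configurations have no forbidden subconfiguration; this forces the
   canonical toppling of a stable such c to topple every vertex exactly once, a
   non-sink vertex u toppling at the first step where c u plus the grains sent
   by the neighbours toppled before reaches deg u.  If c and c' have the same
   canonical toppling, then min(c, c') satisfies the same inequalities, so it
   passes Dhar's burning test (adding the sink's grains and toppling in level
   order returns to it) and is recurrent.  Minimality of the number of grains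
   then gives c = min(c, c') = c'. *)

Section Sandpile.
Variables (V : finType) (e : rel V) (s : V).
Hypothesis e_sym : symmetric e.
Hypothesis e_irr : irreflexive e.

Lemma topple_setE U (x : cfg V) u : topple_set e s U x u =
  if u == s then 0 else x u - (if u \in U then deg e u else 0) + #|[set v in U | e v u]|.
Proof. by rewrite ffunE. Qed.

Lemma card_adj_set1 v u : #|[set w in [set v] | e w u]| = e v u.
Proof.
have -> : [set w in [set v] | e w u] = if e v u then [set v] else set0.
  by apply/setP => w; case evu: (e v u); rewrite !inE; case: eqP => // ->.
by case: (e v u); rewrite ?cards1 ?cards0.
Qed.

Lemma card_adj_le_deg (A : {set V}) u : #|[set w in A | e w u]| <= deg e u.
Proof.
apply: subset_leq_card; apply/subsetP => w; rewrite !inE => /andP[_].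
by rewrite e_sym.
Qed.

Lemma card_adj_lt_deg (A : {set V}) v w :
  e v w -> w \notin A -> #|[set u in A | e v u]| < deg e v.
Proof.
move=> evw wA; rewrite /deg [X in _ < X](cardsD1 w) inE evw add1n ltnS.
apply: subset_leq_card; apply/subsetP => u; rewrite !inE => /andP[uA evu].
by rewrite evu andbT; apply: contraNneq wA => <-.
Qed.

Lemma card_count (P : seq V) (p : pred V) :
  uniq P -> #|[set w | (w \in P) && p w]| = count p P.
Proof.
move=> uP; rewrite -size_filter -(card_uniqP (filter_uniq p uP)).
by apply: eq_card => w; rewrite inE mem_filter andbC.
Qed.

Fixpoint topple_seq (P : seq V) (x : cfg V) : cfg V :=
  if P is v :: P' then topple_seq P' (topple_set e s [set v] x) else x.

Definition legal_seq (P : seq V) (x : cfg V) := forall P1 v P2,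
  P = P1 ++ v :: P2 -> deg e v <= x v + count (e^~ v) P1.

Lemma legal_seq_cons v P (x : cfg V) :
  uniq (v :: P) -> s \notin v :: P -> legal_seq (v :: P) x ->
  unstable e s x v /\ legal_seq P (topple_set e s [set v] x).
Proof.
move=> /andP[vP uP]; rewrite in_cons negb_or => /andP[sv sP] L; split.
  by rewrite /unstable eq_sym sv /=; have := L [::] v P erefl; rewrite addn0.
move=> P1 w P2 E.
have wP : w \in P by rewrite E mem_cat in_cons eqxx orbT.
have ws : w != s by apply: contraNneq sP => <-.
have wv : w != v by apply: contraNneq vP => <-.
have := L (v :: P1) w P2 (congr1 (cons v) E).
by rewrite topple_setE (negbTE ws) in_set1 (negbTE wv) subn0 card_adj_set1 /= addnA.
Qed.

Lemma reach_topple_seq P (x : cfg V) :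
  uniq P -> s \notin P -> legal_seq P x -> reach e s x (topple_seq P x).
Proof.
elim: P x => [|v P IH] x uP sP L /=; first exact: reach_refl.
have [vx L'] := legal_seq_cons uP sP L.
apply: (reach_top vx); apply: IH L'; first by case/andP: uP.
by move: sP; rewrite in_cons negb_or => /andP[].
Qed.

Lemma topple_seq_sink P (x : cfg V) : x s = 0 -> topple_seq P x s = 0.
Proof. by elim: P x => [|v P IH] x //= _; apply: IH; rewrite topple_setE eqxx. Qed.

Lemma topple_seqE P (x : cfg V) : uniq P -> s \notin P -> legal_seq P x ->
  forall u, u != s ->
  topple_seq P x u + (u \in P) * deg e u = x u + count (e^~ u) P.
Proof.
elim: P x => [|v P IH] x uP sP L u us /=; first by rewrite mul0n !addn0.
have [/andP[_ vx] L'] := legal_seq_cons uP sP L.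
have /andP[vP uP'] := uP.
have sP' : s \notin P by move: sP; rewrite in_cons negb_or => /andP[].
have := IH _ uP' sP' L' u us.
rewrite topple_setE (negbTE us) in_set1 card_adj_set1 in_cons.
case: (eqVneq u v) => [->|uv] /=.
  by rewrite (negbTE vP) e_irr /= mul0n !addn0 mul1n; lia.
by case: (u \in P); case: (e v u); rewrite /= ?mul1n ?mul0n; lia.
Qed.

Lemma reach_trans (x y z : cfg V) : reach e s x y -> reach e s y z -> reach e s x z.
Proof.
elim=> {x y} [x|x y v vs _ IH|x y v vx _ IH] yz //.
- exact: reach_add vs (IH yz).
- exact: reach_top vx (IH yz).
Qed.

Lemma reach_add_cfg (x y : cfg V) : y s = 0 -> reach e s x [ffun u => x u + y u].
Proof.
move: {2}(\sum_u y u) (erefl (\sum_u y u)) => k.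
elim: k y => [|k IH] y sum_y ys.
  suff -> : [ffun u => x u + y u] = x by exact: reach_refl.
  apply/ffunP => u; rewrite ffunE.
  have : y u <= \sum_u y u by rewrite (bigD1 u) //= leq_addr.
  by rewrite sum_y leqn0 => /eqP ->; rewrite addn0.
have [v yv] : exists v, 0 < y v.
  apply/existsP; apply: contraT; rewrite negb_exists => /forallP y0.
  by move: sum_y; rewrite big1 // => i _; apply/eqP; rewrite -leqn0 leqNgt y0.
have vs : v != s by apply: contraTneq yv => ->; rewrite ys.
pose y' : cfg V := [ffun u => y u - (u == v)].
have sum_y' : \sum_u y' u = k.
  rewrite (bigD1 v) //= ffunE eqxx.
  rewrite (eq_bigr y) => [|i /= iv]; last by rewrite ffunE (negbTE iv) subn0.
  by move: sum_y; rewrite (bigD1 v) //=; lia.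
apply: reach_trans (IH y' sum_y' _) _; first by rewrite ffunE ys.
have -> : [ffun u => x u + y u] = add_grain v [ffun u => x u + y' u].
  apply/ffunP => u; rewrite !ffunE.
  case: (eqVneq u v) => [->|uv] /=; last by rewrite subn0 addn0.
  by rewrite addn1 -addnS subn1 prednK.
exact: reach_add vs (reach_refl _ _ _).
Qed.

Lemma reach_leq (x z : cfg V) : (forall u, x u <= z u) -> x s = z s -> reach e s x z.
Proof.
move=> xz xzs; have -> : z = [ffun u => x u + [ffun u => z u - x u] u].
  by apply/ffunP => u; rewrite !ffunE subnKC.
by apply: reach_add_cfg; rewrite ffunE xzs subnn.
Qed.

Definition no_forbidden_subconfig (x : cfg V) := forall A : {set V},
  s \notin A -> A != set0 -> exists2 v, v \in A & #|[set w in A | e v w]| <= x v.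

Lemma no_forbidden_add_grain v x :
  no_forbidden_subconfig x -> no_forbidden_subconfig (add_grain v x).
Proof.
move=> nf A sA A0; have [w wA Hw] := nf A sA A0; exists w => //.
by rewrite ffunE; apply: leq_trans Hw (leq_addr _ _).
Qed.

Lemma no_forbidden_topple v x : unstable e s x v ->
  no_forbidden_subconfig x -> no_forbidden_subconfig (topple_set e s [set v] x).
Proof.
move=> /andP[vs vx] nf A sA A0.
case: (boolP (v \in A)) => vA; last first.
  have [w wA Hw] := nf A sA A0; exists w => //.
  have ws : w != s by apply: contraNneq sA => <-.
  have wv : w != v by apply: contraNneq vA => <-.
  rewrite topple_setE (negbTE ws) in_set1 (negbTE wv) subn0.
  exact: leq_trans Hw (leq_addr _ _).
have [A'0|A'n0] := eqVneq (A :\ v) set0.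
  exists v => //; suff -> : [set w in A | e v w] = set0 by rewrite cards0.
  apply/setP => w; rewrite !inE; have [->|wv] := eqVneq w v; first by rewrite e_irr andbF.
  have : w \notin A :\ v by rewrite A'0 inE.
  by rewrite !inE wv /= => /negbTE ->.
have sA' : s \notin A :\ v by rewrite !inE negb_and sA orbT.
have [w] := nf _ sA' A'n0; rewrite !inE => /andP[wv wA] Hw; exists w => //.
have ws : w != s by apply: contraNneq sA => <-.
rewrite topple_setE (negbTE ws) in_set1 (negbTE wv) subn0 card_adj_set1.
rewrite (cardsD1 v) in_set vA /= (e_sym w v) addnC leq_add2r.
by rewrite (_ : _ :\ v = [set u in A :\ v | e w u]) //; apply/setP => u; rewrite !inE andbA.
Qed.

Lemma reach_no_forbidden (x y : cfg V) : reach e s x y ->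
  no_forbidden_subconfig x -> x s = 0 -> no_forbidden_subconfig y /\ y s = 0.
Proof.
elim=> {x y} [x|x y v vs _ IH|x y v vx _ IH] nf xs //.
- apply: IH; first exact: no_forbidden_add_grain.
  by rewrite ffunE xs eq_sym (negbTE vs).
- apply: IH; first exact: no_forbidden_topple.
  by rewrite topple_setE eqxx.
Qed.

Definition sink_nbr : cfg V := [ffun u => e s u : nat].

Definition burnable (d : cfg V) (lev : V -> nat) := forall u, u != s ->
  deg e u <= d u + #|[set w | e w u & (w == s) || (lev w < lev u)]|.

Lemma burnable_min d d' lev : burnable d lev -> burnable d' lev ->
  burnable [ffun u => minn (d u) (d' u)] lev.
Proof. by move=> bd bd' u us; rewrite ffunE addn_minl leq_min bd ?bd'. Qed.

Section Burning.
Variables (d : cfg V) (lev : V -> nat).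
Hypothesis d_sink : d s = 0.
Hypothesis d_burnable : burnable d lev.

Let order := sort (fun a b => lev a <= lev b) (enum [set~ s]).
Let order_uniq : uniq order. Proof. by rewrite sort_uniq enum_uniq. Qed.
Let mem_order w : (w \in order) = (w != s).
Proof. by rewrite mem_sort mem_enum !inE. Qed.

Let legal_order (y : cfg V) : legal_seq order [ffun u => d u + sink_nbr u + y u].
Proof.
move=> P1 v P2 E.
have vs : v != s by rewrite -mem_order E mem_cat in_cons eqxx orbT.
have leq_lev_P2 w : w \in P2 -> lev v <= lev w.
  have lev_trans : transitive (fun a b => lev a <= lev b).
    by move=> a b c; apply: leq_trans.
  have : sorted (fun a b => lev a <= lev b) order.
    by apply: sort_sorted => a b; apply: leq_total.
  by rewrite E sorted_cat_cons => /andP[_ /(order_path_min lev_trans)/allP]; apply.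
have earlier : #|[set w | e w v & (w == s) || (lev w < lev v)]| <=
    e s v + count (e^~ v) P1.
  have uP1 : uniq P1 by move: order_uniq; rewrite E cat_uniq => /andP[].
  rewrite -card_count // -card_adj_set1.
  apply: leq_trans (leq_card_setU _ _); apply: subset_leq_card.
  apply/subsetP => w; rewrite !inE => /andP[ewv]; rewrite ewv !andbT.
  have [//|ws /= lt] := eqVneq w s.
  have : w \in order by rewrite mem_order.
  rewrite E mem_cat in_cons => /orP[//|/orP[/eqP wv|/leq_lev_P2]].
    by move: lt; rewrite wv ltnn.
  by rewrite leqNgt lt.
by have := d_burnable vs; rewrite !ffunE; lia.
Qed.

Let topple_order (y : cfg V) : y s = 0 ->
  topple_seq order [ffun u => d u + sink_nbr u + y u] = [ffun u => d u + y u].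
Proof.
move=> ys; have so : s \notin order by rewrite mem_order eqxx.
apply/ffunP => u; rewrite [RHS]ffunE; have [->|us] := eqVneq u s.
  by rewrite d_sink ys topple_seq_sink // !ffunE d_sink ys e_irr.
have := topple_seqE order_uniq so (legal_order y) us.
rewrite mem_order us mul1n !ffunE.
have : count (e^~ u) order + e s u = deg e u.
  rewrite -card_count // /deg (cardsD1 s [set w | e u w]) in_set (e_sym u s) addnC.
  by congr (_ + _); apply: eq_card => w; rewrite !inE mem_order (e_sym w u).
by case: (e s u) => /=; lia.
Qed.

Lemma reach_burn_multiple k : reach e s [ffun u => d u + k * sink_nbr u] d.
Proof.
elim: k => [|k IH].
  rewrite (_ : [ffun _ => _] = d); first exact: reach_refl.
  by apply/ffunP => u; rewrite ffunE mul0n addn0.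
apply: reach_trans IH; pose y : cfg V := [ffun u => k * sink_nbr u].
have ys : y s = 0 by rewrite !ffunE e_irr muln0.
have -> : [ffun u => d u + k.+1 * sink_nbr u] = [ffun u => d u + sink_nbr u + y u].
  by apply/ffunP => u; rewrite !ffunE mulSn addnA.
have -> : [ffun u => d u + k * sink_nbr u] = [ffun u => d u + y u].
  by apply/ffunP => u; rewrite !ffunE.
rewrite -topple_order //; apply: reach_topple_seq (legal_order y) => //.
by rewrite mem_order eqxx.
Qed.

End Burning.

Lemma rec_min_below c d : rec_min e s c -> recurrent e s d ->
  (forall u, d u <= c u) -> d = c.
Proof.
move=> [_ min_c] rd dc; apply/ffunP => u; have := min_c d rd.
rewrite /Defs.total (bigD1 u) //= [X in _ <= X](bigD1 u) //=.
have : \sum_(i | i != u) d i <= \sum_(i | i != u) c i by apply: leq_sum => i _.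
by have := dc u; lia.
Qed.

Section CanonicalToppling.
Variable R : {set V}.

Definition canon_cfg (c : cfg V) k := (canon_aux e s (~: R) c k).2.
Definition canon_block (c : cfg V) k := canon_top e s (~: R) c k.
Arguments canon_cfg : simpl never.
Arguments canon_block : simpl never.

Fixpoint toppled (c : cfg V) k : {set V} :=
  if k is k'.+1 then toppled c k' :|: canon_block c k else [set s].

Definition toppling_level (c : cfg V) (lev : V -> nat) := forall u,
  u \in toppled c (lev u) /\ forall j, u \in toppled c j -> lev u <= j.

Lemma canon_cfg0 c : canon_cfg c 0 = topple_set e s [set s] c.
Proof. by []. Qed.

Lemma canon_cfgS c k :
  canon_cfg c k.+1 = topple_set e s (canon_block c k.+1) (canon_cfg c k).
Proof. by []. Qed.

Lemma canon_blockS c k : canon_block c k.+1 =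
  [set v in (if odd k.+1 then ~: R else R) | unstable e s (canon_cfg c k) v].
Proof. by rewrite /canon_block /canon_top /=; case: odd; rewrite ?setCK. Qed.

Lemma toppledS c k : toppled c k.+1 = toppled c k :|: canon_block c k.+1.
Proof. by []. Qed.

Lemma sink_toppled c k : s \in toppled c k.
Proof. by elim: k => [|k IH]; [rewrite inE | rewrite toppledS inE IH]. Qed.

Lemma toppled_mono c i j : i <= j -> toppled c i \subset toppled c j.
Proof.
elim: j => [|j IH]; first by rewrite leqn0 => /eqP ->.
rewrite leq_eqVlt => /orP[/eqP -> //|/IH sub].
by apply: subset_trans sub _; rewrite toppledS subsetUl.
Qed.

Lemma canon_cfgE c : stable e s c -> forall k u, u != s ->
  canon_cfg c k u + (u \in toppled c k) * deg e u
  = c u + #|[set w in toppled c k | e w u]|.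
Proof.
move=> stc; elim=> [|k IH] u us.
  by rewrite canon_cfg0 topple_setE (negbTE us) in_set1 (negbTE us) subn0 mul0n addn0.
have fresh v : v \in canon_block c k.+1 -> v \notin toppled c k.
  rewrite canon_blockS in_set => /andP[_ /andP[vs vk]].
  apply/negP => vT; have := IH v vs; rewrite vT mul1n.
  by have := card_adj_le_deg (toppled c k) v; have := stc v vs; lia.
rewrite canon_cfgS topple_setE (negbTE us) toppledS in_setU.
have -> : [set w in toppled c k :|: canon_block c k.+1 | e w u] =
    [set w in toppled c k | e w u] :|: [set w in canon_block c k.+1 | e w u].
  by apply/setP => w; rewrite !inE andb_orl.
rewrite cardsU (_ : _ :&: _ = set0) ?cards0 ?subn0; last first.
  apply/setP => w; rewrite in_set0.
  case: (boolP (w \in canon_block c k.+1)) => [/fresh/negbTE wT|/negbTE wb].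
    by rewrite in_setI in_set wT.
  by rewrite in_setI andbC in_set wb.
have := IH u us; case: (boolP (u \in canon_block c k.+1)) => ub.
  rewrite (negbTE (fresh u ub)) /= mul0n addn0 mul1n.
  by move: ub; rewrite canon_blockS in_set => /andP[_ /andP[_]]; lia.
by rewrite /= orbF; case: (u \in toppled c k); rewrite ?mul1n ?mul0n; lia.
Qed.

Lemma toppled_full c k : stable e s c -> no_forbidden_subconfig c ->
  toppled c k = toppled c k.+2 -> toppled c k = setT.
Proof.
move=> stc nfc Tk2.
have Tk1 : toppled c k.+1 = toppled c k.
  by apply/eqP; rewrite eqEsubset [X in _ && X]toppled_mono // andbT Tk2 toppled_mono.
apply/setP => v; rewrite inE; apply: contraT => vT; exfalso.
have sA : s \notin ~: toppled c k by rewrite inE negbK sink_toppled.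
have A0 : ~: toppled c k != set0 by apply/set0Pn; exists v; rewrite inE.
have [w] := nfc _ sA A0; rewrite inE => wT Hw.
have ws : w != s by apply: contraNneq wT => ->; apply: sink_toppled.
(* After toppled c k, w holds at least deg w grains: it topples in the next
   block of its side, which is one of blocks k.+1 and k.+2. *)
have topples j : toppled c j = toppled c k -> w \notin canon_block c j.+1 ->
    w \notin (if odd j.+1 then ~: R else R).
  move=> Tj; rewrite canon_blockS in_set /unstable ws /=; apply: contra => wside.
  rewrite wside /=; have := canon_cfgE stc j ws; rewrite Tj (negbTE wT) mul0n addn0.
  have : deg e w = #|[set x in toppled c k | e x w]| + #|[set x in ~: toppled c k | e w x]|.
    rewrite /deg -(cardsID (toppled c k) [set x | e w x]).
    by congr (_ + _); apply: eq_card => x; rewrite !inE ?(e_sym x w) // andbC.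
  by lia.
have nb1 : w \notin canon_block c k.+1.
  by apply: contra wT => wb; rewrite -Tk1 toppledS inE wb orbT.
have nb2 : w \notin canon_block c k.+2.
  by apply: contra wT => wb; rewrite Tk2 toppledS inE wb orbT.
have := topples k erefl nb1; have := topples k.+1 Tk1 nb2.
by rewrite !oddS; case: odd; rewrite /= !inE; case: (w \in R).
Qed.

Lemma toppled_eventually_full c : stable e s c -> no_forbidden_subconfig c ->
  exists K, toppled c K = setT.
Proof.
move=> stc nfc.
have grow i : (exists2 j, j < i & toppled c (2 * j) = toppled c (2 * j).+2)
    \/ i < #|toppled c (2 * i)|.
  elim: i => [|i [[j ji Tj]|IH]].
  - by right; apply/card_gt0P; exists s; apply: sink_toppled.
  - by left; exists j => //; apply: ltnW.
  have [Ti|Ti] := eqVneq (toppled c (2 * i)) (toppled c (2 * i).+2); first by left; exists i.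
  right; rewrite (_ : 2 * i.+1 = (2 * i).+2); last by lia.
  have : toppled c (2 * i) \proper toppled c (2 * i).+2.
    by rewrite properEneq Ti toppled_mono //; lia.
  by move/proper_card; lia.
case: (grow #|V|) => [[j _ Tj]|]; first by exists (2 * j); apply: toppled_full Tj.
by rewrite ltnNge max_card.
Qed.

Lemma exists_toppling_level c : stable e s c -> no_forbidden_subconfig c ->
  exists lev, toppling_level c lev.
Proof.
move=> stc nfc; have [K TK] := toppled_eventually_full stc nfc.
have ex u : exists k, u \in toppled c k by exists K; rewrite TK inE.
by exists (fun u => ex_minn (ex u)) => u; case: ex_minnP.
Qed.

Lemma canon_burnable c lev : stable e s c -> toppling_level c lev -> burnable c lev.
Proof.
move=> stc levc u us; have [uT umin] := levc u.
case E: (lev u) uT => [|j] uT; first by move: uT; rewrite in_set1 (negbTE us).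
have ujT : u \notin toppled c j by apply/negP => /umin; rewrite E ltnn.
move: uT; rewrite toppledS in_setU (negbTE ujT) canon_blockS in_set.
case/andP=> _ /andP[_]; have := canon_cfgE stc j us; rewrite (negbTE ujT) mul0n addn0.
move=> -> /leq_trans; apply; rewrite leq_add2l; apply: subset_leq_card.
apply/subsetP => w; rewrite !inE => /andP[wT ->]; have [_ /(_ _ wT)] := levc w.
by rewrite ltnS orbC => ->.
Qed.

End CanonicalToppling.

Section RowsAndColumns.
Variable R : {set V}.
Hypothesis rows_indep : forall u w, u \in R -> w \in R -> ~~ e u w.
Hypothesis sink_adj : forall u, u != s -> e s u = (u \notin R).
Hypothesis e_conn : forall A : {set V}, s \notin A -> A != set0 ->
  exists v w, [/\ v \in A, w \notin A & e v w].

Lemma no_forbidden_cmax : no_forbidden_subconfig (cmax e s).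
Proof.
move=> A sA A0; have [v [w [vA wA vw]]] := e_conn sA A0; exists v => //.
have vs : v != s by apply: contraNneq sA => <-.
have lt_deg := card_adj_lt_deg vw wA.
by rewrite ffunE (negbTE vs) -ltnS (ltn_predK lt_deg).
Qed.

(* Rows are pairwise non-adjacent, so toppling each row of a once leaves the
   rows with d and gives each column d + K; K = 2 #|V| makes a >= cmax. *)
Lemma reach_cmax_sink_multiple (d : cfg V) : d s = 0 ->
  reach e s (cmax e s) [ffun u => d u + (2 * #|V|) * sink_nbr u].
Proof.
move=> ds; set K := 2 * #|V|; pose rows := enum (R :\ s).
pose a : cfg V := [ffun u => if u == s then 0 else if u \in R then d u + deg e u
                   else d u + K - count (e^~ u) rows].
have uniq_rows : uniq rows := enum_uniq _.
have mem_rows w : (w \in rows) = (w != s) && (w \in R) by rewrite mem_enum !inE.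
have s_rows : s \notin rows by rewrite mem_rows eqxx.
have count_le u : count (e^~ u) rows <= #|V|.
  by apply: leq_trans (count_size _ _) _; rewrite -cardE max_card.
have deg_le u : deg e u <= #|V| by apply: max_card.
have legal : legal_seq rows a.
  move=> P1 v P2 E; have : v \in rows by rewrite E mem_cat in_cons eqxx orbT.
  by rewrite mem_rows => /andP[vs vR]; rewrite ffunE (negbTE vs) vR; lia.
have -> : [ffun u => d u + K * sink_nbr u] = topple_seq rows a.
  apply/ffunP => u; rewrite ffunE; have [->|us] := eqVneq u s.
    by rewrite topple_seq_sink ?ds ?ffunE ?e_irr ?muln0 ?eqxx.
  have := topple_seqE uniq_rows s_rows legal us.
  rewrite mem_rows us /= !ffunE (negbTE us) (sink_adj us).
  case: (boolP (u \in R)) => uR /=; last by have := count_le u; rewrite mul0n muln1; lia.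
  have -> : count (e^~ u) rows = 0.
    apply/eqP; rewrite -leqn0 leqNgt -has_count; apply/hasPn => w.
    by rewrite mem_rows => /andP[_ wR]; apply: rows_indep.
  by rewrite mul1n muln0; lia.
apply: reach_trans (reach_topple_seq uniq_rows s_rows legal).
apply: reach_leq; last by rewrite !ffunE eqxx.
move=> u; rewrite !ffunE; case: (u == s) => //.
by case: (u \in R); have := count_le u; have := deg_le u; lia.
Qed.

Lemma burnable_reach_cmax (d : cfg V) lev :
  d s = 0 -> burnable d lev -> reach e s (cmax e s) d.
Proof.
move=> ds bd.
exact: reach_trans (reach_cmax_sink_multiple ds) (reach_burn_multiple ds bd _).
Qed.

Theorem canon_top_inj c c' : rec_min e s c -> rec_min e s c' ->
  (forall k, canon_top e s (~: R) c k = canon_top e s (~: R) c' k) -> c = c'.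
Proof.
move=> minc minc' same_blocks.
have [[[stc rc] _] [[stc' _] _]] := (minc, minc').
have cmax_sink : cmax e s s = 0 by rewrite ffunE eqxx.
have [nfc cs] := reach_no_forbidden rc no_forbidden_cmax cmax_sink.
have [lev levc] := exists_toppling_level R stc nfc.
have same_toppled k : toppled R c' k = toppled R c k.
  by elim: k => [|k IH] //; rewrite !toppledS IH /canon_block same_blocks.
have levc' : toppling_level R c' lev.
  move=> u; have [uT umin] := levc u.
  by split=> [|j]; rewrite same_toppled //; apply: umin.
pose d : cfg V := [ffun u => minn (c u) (c' u)].
have rd : recurrent e s d.
  split=> [u us|]; first by rewrite /d ffunE; apply: leq_ltn_trans (geq_minl _ _) (stc u us).
  apply: (burnable_reach_cmax (lev := lev)); first by rewrite /d ffunE cs min0n.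
  exact: burnable_min (canon_burnable stc levc) (canon_burnable stc' levc').
have <- : d = c by apply: rec_min_below minc rd _ => u; rewrite /d ffunE geq_minl.
by apply: rec_min_below minc' rd _ => u; rewrite /d ffunE geq_minr.
Qed.

End RowsAndColumns.

End Sandpile.

Lemma ferrers_rel_sym n (R : {set 'I_n.+1}) : symmetric (ferrers_rel R).
Proof. by move=> i j; rewrite /ferrers_rel orbC. Qed.

Lemma ferrers_rel_irr n (R : {set 'I_n.+1}) : irreflexive (ferrers_rel R).
Proof. by move=> i; rewrite /ferrers_rel ltnn !andbF. Qed.

Lemma ferrers_rows_indep n (R : {set 'I_n.+1}) u w :
  u \in R -> w \in R -> ~~ ferrers_rel R u w.
Proof. by rewrite /ferrers_rel => -> ->. Qed.

Lemma ferrers_sink_adj n (R : {set 'I_n.+1}) : is_ferrers R ->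
  forall u, u != ord0 -> ferrers_rel R ord0 u = (u \notin R).
Proof.
case=> R0 _ u u0; rewrite /ferrers_rel R0 /= andbF orbF lt0n.
by rewrite (_ : _ != 0 :> nat) ?andbT //; apply: contraNneq u0 => u0; apply/val_inj.
Qed.

Lemma ferrers_conn n (R : {set 'I_n.+1}) : is_ferrers R ->
  forall A : {set 'I_n.+1}, ord0 \notin A -> A != set0 ->
  exists v w, [/\ v \in A, w \notin A & ferrers_rel R v w].
Proof.
move=> hF A A0 /set0Pn[v vA]; have [R0 Rmax] := hF.
have col_sink u : u \in A -> u \notin R -> ferrers_rel R u ord0.
  move=> uA uR; rewrite ferrers_rel_sym ferrers_sink_adj //.
  by apply: contraNneq A0 => <-.
case: (boolP (v \in R)) => vR; last by exists v, ord0; rewrite vA A0 col_sink.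
case: (boolP (ord_max \in A)) => mA; first by exists ord_max, ord0; rewrite mA A0 col_sink.
exists v, ord_max; rewrite vA mA /ferrers_rel vR Rmax /= -ltnS ltn_neqAle ltn_ord.
rewrite andbT andbF orbF eqSS; split=> //.
by apply: contraNneq Rmax => vn; rewrite (_ : ord_max = v) //; apply/val_inj.
Qed.

Theorem theorem3p6 (n : nat) (R : {set 'I_n.+1}) (hF : is_ferrers R)
  (c c' : {ffun 'I_n.+1 -> nat}) :
  rec_min (ferrers_rel R) ord0 c ->
  rec_min (ferrers_rel R) ord0 c' ->
  ((forall k, canon_top (ferrers_rel R) ord0 (~: R) c k
              = canon_top (ferrers_rel R) ord0 (~: R) c' k)
   <-> c = c').
Proof.
move=> minc minc'; split=> [same_blocks|-> //].
exact: (canon_top_inj (ferrers_rel_sym R) (ferrers_rel_irr R)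
  (@ferrers_rows_indep n R) (ferrers_sink_adj hF) (ferrers_conn hF) minc minc' same_blocks).
Qed.
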